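(* (a) For every integer $k \geq 10$, if $|q - q_k| \leq q_k^{-2k-6}$ then $q \in \mathcal{B}_3$. (b) If $0 < q - q_9 \leq q_9^{-24}$ then $q \in \mathcal{B}_3$.
   Context: For $q \in (1,2)$ let $I_q = [0, \frac{1}{q-1}]$. A sequence $(\epsilon_j)_{j\ge1} \in \{0,1\}^\mathbb{N}$ is a base $q$ expansion of $x$ if $x = \sum_{j\ge1} \epsilon_j q^{-j}$; let $\Sigma_q(x)$ be the set of base $q$ expansions of $x$. Let $\mathcal{U}_q^{(3)} = \{x \in I_q : |\Sigma_q(x)| = 3\}$ and $\mathcal{B}_3 = \{q \in (1,2) : \mathcal{U}_q^{(3)} \neq \emptyset\}$. For $k \geq 2$, the $k$-Bonacci number $q_k$ is the unique root in $(1,2)$ of $x^k - x^{k-1} - \cdots - x - 1 = 0$. *)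

From Stdlib Require Import Reals Lra.
Open Scope R_scope.

(* Digit sequence eps : nat -> bool, where eps j encodes epsilon_{j+1}. *)
Definition digit (b : bool) : R := if b then 1 else 0.

Definition is_expansion (q x : R) (eps : nat -> bool) : Prop :=
  infinite_sum (fun j => digit (eps j) / q ^ (S j)) x.

Definition in_Iq (q x : R) : Prop := 0 <= x <= 1 / (q - 1).

Definition has_exactly_three_expansions (q x : R) : Prop :=
  exists e1 e2 e3 : nat -> bool,
    is_expansion q x e1 /\ is_expansion q x e2 /\ is_expansion q x e3 /\
    e1 <> e2 /\ e1 <> e3 /\ e2 <> e3 /\
    (forall e, is_expansion q x e -> e = e1 \/ e = e2 \/ e = e3).

(* U_q^(3) nonempty *)
Definition in_B3 (q : R) : Prop :=
  1 < q < 2 /\ exists x, in_Iq q x /\ has_exactly_three_expansions q x.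

Definition is_kbonacci (k : nat) (r : R) : Prop :=
  1 < r < 2 /\ r ^ k = sum_f_R0 (fun i => r ^ i) (k - 1).

(* For 1 < q < 2 let T be the greedy map y |-> q y - [y >= 1/q] and S = [1/q, 1/(q(q-1))]
   the switch region, the only place where an expansion may choose its next digit. A point
   whose T-orbit avoids S has a unique expansion. Hence a point x of S has exactly three
   expansions as soon as its child q x - 1 has a unique expansion while its child q x is
   carried by forced digits to a second point z of S whose two children have unique
   expansions.

   Near q_k put X = q^k, so that X (2 - q) is close to 1. For x = (1 + a/X^2)/q the child
   q x - 1 = a/X^2 reaches a after 2k steps, q x lies just below 1/(q-1) and reaches z after
   k-1 forced steps, and the children of z reach a + c2 and a + c3 after k more steps, with
   c2, c3 of size X (1 - X (2 - q)), at most 3/100 when |q - q_k| <= q_k^(-2k-6). It remains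
   to choose a in [1/5, 1/5 + 1/50] such that a, a + c2 and a + c3 all avoid S. On a
   parameter interval the iterates are affine of slope q^n until they meet S; a meeting
   only excludes a window of parameters of length |S| < 1/396, after which two more steps
   are automatically clear. So in each block of three steps the three translates keep a
   common subinterval of relative length q^-3, and nested intervals produce a. All the
   estimates hold for every k >= 9, which gives both parts of the theorem. *)

From Stdlib Require Import Reals Lra Lia List FunctionalExtensionality ClassicalEpsilon Classical.
Import ListNotations.
Open Scope R_scope.

(** * Greedy expansions *)

Definition greedy_map (q y : R) : R := if Rlt_dec y (/ q) then q * y else q * y - 1.
Definition greedy_digit (q y : R) : bool := if Rlt_dec y (/ q) then false else true.
Definition greedy_iter (q : R) (n : nat) (y : R) : R := Nat.iter n (greedy_map q) y.
Definition greedy_expansion (q y : R) (n : nat) : bool := greedy_digit q (greedy_iter q n y).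

(* Both digits are admissible exactly on the switch region. *)
Definition switch_region (q y : R) : Prop := / q <= y <= / (q * (q - 1)).
Definition avoids_switch (q y : R) : Prop := forall n, ~ switch_region q (greedy_iter q n y).

Definition scons (b : bool) (e : nat -> bool) (n : nat) : bool :=
  match n with O => b | S m => e m end.
Definition splice (m : nat) (e f : nat -> bool) (n : nat) : bool :=
  if (n <? m)%nat then e n else f (n - m)%nat.

Lemma scons_eta e : e = scons (e O) (fun n => e (S n)).
Proof. apply functional_extensionality; intros [|n]; reflexivity. Qed.

Lemma splice_eta m e f : (forall n, (n < m)%nat -> e n = f n) ->
  e = splice m f (fun n => e (m + n)%nat).
Proof.
  intros Hef; apply functional_extensionality; intros n; unfold splice.
  destruct (Nat.ltb_spec n m) as [Hn | Hn]; [now rewrite Hef |].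
  f_equal; lia.
Qed.

Lemma digit_true : digit true = 1.
Proof. reflexivity. Qed.

Lemma digit_false : digit false = 0.
Proof. reflexivity. Qed.

Lemma greedy_map_digit q y : greedy_map q y = q * y - digit (greedy_digit q y).
Proof. unfold greedy_map, greedy_digit, digit; destruct Rlt_dec; lra. Qed.

Lemma greedy_iter_add q m n y : greedy_iter q (m + n) y = greedy_iter q m (greedy_iter q n y).
Proof. exact (Nat.iter_add _ _ _ _ _). Qed.

Lemma greedy_iter_succ q n y : greedy_iter q (S n) y = greedy_map q (greedy_iter q n y).
Proof. reflexivity. Qed.

Lemma greedy_iter_succ_r q n y : greedy_iter q (S n) y = greedy_iter q n (greedy_map q y).
Proof. exact (Nat.iter_succ_r _ _ _ _). Qed.

Lemma Un_cv_const c : Un_cv (fun _ => c) c.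
Proof. intros eps Heps; exists O; intros n _; unfold Rdist; rewrite Rminus_diag, Rabs_R0; lra. Qed.

Lemma is_expansion_tail q x e : 0 < q -> is_expansion q x e ->
  is_expansion q (q * x - digit (e O)) (fun j => e (S j)).
Proof.
  unfold is_expansion; intros Hq H.
  assert (Hx := CV_minus _ _ _ _
    (CV_mult _ _ _ _ (Un_cv_const q) (CV_shift' _ 1 _ H)) (Un_cv_const (digit (e O)))).
  eapply Un_cv_ext; [| exact Hx]; intros n; cbv beta.
  rewrite Nat.add_1_r, (decomp_sum _ (S n)), Rmult_plus_distr_l, scal_sum by lia.
  assert (Hterm : forall j, (j <= n)%nat ->
    digit (e (S j)) / q ^ S (S j) * q = digit (e (S j)) / q ^ S j).
  { intros j _; simpl; field; split; [apply pow_nonzero |]; lra. }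
  simpl pred; rewrite (sum_eq _ _ n Hterm); simpl; field; lra.
Qed.

Lemma is_expansion_scons q y b e : 0 < q -> is_expansion q (q * y - digit b) e ->
  is_expansion q y (scons b e).
Proof.
  unfold is_expansion; intros Hq H; apply CV_shift with (k := 1%nat).
  replace y with (digit b / q + / q * (q * y - digit b)) by (field; lra).
  eapply Un_cv_ext;
    [| exact (CV_plus _ _ _ _ (Un_cv_const _) (CV_mult _ _ _ _ (Un_cv_const (/ q)) H))].
  intros n; cbv beta; rewrite Nat.add_1_r, (decomp_sum _ (S n)), scal_sum by lia; simpl.
  f_equal; [field; lra |].
  apply sum_eq; intros j _; simpl; field; split; [apply pow_nonzero |]; lra.
Qed.

Lemma sum_f_R0_geom q n : 1 < q -> sum_f_R0 (fun j => / q ^ S j) n = (1 - / q ^ S n) / (q - 1).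
Proof.
  intros Hq; induction n as [|n IH]; simpl in *; [field; lra |].
  rewrite IH; field; split; [apply pow_nonzero |]; lra.
Qed.

Lemma is_expansion_bounds q x e : 1 < q -> is_expansion q x e -> 0 <= x <= / (q - 1).
Proof.
  intros Hq H.
  assert (Hpow : forall j, 0 < / q ^ S j) by (intros j; apply Rinv_0_lt_compat, pow_lt; lra).
  assert (Hterm : forall j, 0 <= digit (e j) / q ^ S j <= / q ^ S j).
  { intros j; specialize (Hpow j); unfold digit, Rdiv; destruct (e j); lra. }
  split.
  - eapply Rle_cv_lim; [| apply (Un_cv_const 0) | exact H].
    intros n; apply cond_pos_sum; intros j; apply Hterm.
  - eapply Rle_cv_lim; [| exact H | apply (Un_cv_const (/ (q - 1)))].
    intros n; apply Rle_trans with (sum_f_R0 (fun j => / q ^ S j) n).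
    + apply sum_Rle; intros j _; apply Hterm.
    + rewrite sum_f_R0_geom by lra; unfold Rdiv.
      assert (0 < / (q - 1)) by (apply Rinv_0_lt_compat; lra).
      specialize (Hpow n); nra.
Qed.

Lemma is_expansion_first_digit q x e : 1 < q -> ~ switch_region q x ->
  is_expansion q x e -> e O = greedy_digit q x.
Proof.
  intros Hq Hx H.
  destruct (is_expansion_bounds _ _ _ Hq (is_expansion_tail q x e ltac:(lra) H)) as [H0 H1].
  assert (Hinv : q * / q = 1) by (field; lra).
  assert (Hinv' : / (q * (q - 1)) = / q * / (q - 1)) by (field; lra).
  assert (0 < / q) by (apply Rinv_0_lt_compat; lra).
  unfold greedy_digit, digit, switch_region in *; destruct (e O), Rlt_dec; auto; exfalso.
  - nra.
  - apply Hx; split; [lra |]; rewrite Hinv'; nra.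
Qed.

Lemma greedy_map_in_Iq q y : 1 < q <= 2 -> in_Iq q y -> in_Iq q (greedy_map q y).
Proof.
  unfold in_Iq, greedy_map; intros Hq Hy.
  assert (Hinv : q * / q = 1) by (field; lra).
  assert (Hinv1 : (q - 1) * (1 / (q - 1)) = 1) by (field; lra).
  destruct Rlt_dec; split; nra.
Qed.

Lemma greedy_iter_in_Iq q n y : 1 < q <= 2 -> in_Iq q y -> in_Iq q (greedy_iter q n y).
Proof.
  intros Hq Hy; induction n as [|n IH]; [exact Hy |].
  apply greedy_map_in_Iq; auto.
Qed.

Lemma greedy_partial_sum q y n : 0 < q ->
  sum_f_R0 (fun j => digit (greedy_expansion q y j) / q ^ S j) n
  = y - greedy_iter q (S n) y / q ^ S n.
Proof.
  intros Hq; unfold greedy_expansion.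
  induction n as [|n IH]; rewrite greedy_iter_succ, greedy_map_digit.
  - simpl; field; lra.
  - rewrite tech5, IH; simpl; field; split; [apply pow_nonzero |]; lra.
Qed.

Lemma is_expansion_greedy q y : 1 < q <= 2 -> in_Iq q y ->
  is_expansion q y (greedy_expansion q y).
Proof.
  intros Hq Hy eps Heps.
  destruct (pow_lt_1_zero (/ q)) with (y := eps * (q - 1)) as [N HN].
  { rewrite Rabs_pos_eq by (apply Rlt_le, Rinv_0_lt_compat; lra).
    rewrite <- Rinv_1; apply Rinv_lt_contravar; lra. }
  { nra. }
  exists N; intros n Hn; unfold Rdist; rewrite greedy_partial_sum by lra.
  destruct (greedy_iter_in_Iq q (S n) y Hq Hy) as [H0 H1].
  specialize (HN (S n) ltac:(lia)).
  rewrite Rabs_pos_eq, pow_inv in HN by (apply pow_le, Rlt_le, Rinv_0_lt_compat; lra).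
  assert (0 < / q ^ S n) by (apply Rinv_0_lt_compat, pow_lt; lra).
  assert (Hinv1 : (q - 1) * (1 / (q - 1)) = 1) by (field; lra).
  replace (y - greedy_iter q (S n) y / q ^ S n - y)
    with (- (greedy_iter q (S n) y * / q ^ S n)) by (unfold Rdiv; ring).
  assert (Hbound : greedy_iter q (S n) y * / q ^ S n <= 1 / (q - 1) * / q ^ S n)
    by (apply Rmult_le_compat_r; lra).
  assert (Hpos : 0 < 1 / (q - 1)) by (unfold Rdiv; rewrite Rmult_1_l; apply Rinv_0_lt_compat; lra).
  rewrite Rabs_Ropp, Rabs_pos_eq by nra; nra.
Qed.

Lemma is_expansion_forced_prefix q m y e : 1 < q ->
  (forall j, (j < m)%nat -> ~ switch_region q (greedy_iter q j y)) -> is_expansion q y e ->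
  (forall j, (j < m)%nat -> e j = greedy_expansion q y j) /\
  is_expansion q (greedy_iter q m y) (fun j => e (m + j)%nat).
Proof.
  intros Hq; revert y e; induction m as [|m IH]; intros y e Hfree H; [split; [lia | exact H] |].
  assert (H0 : e O = greedy_digit q y)
    by (apply is_expansion_first_digit; auto; apply (Hfree O); lia).
  assert (Htail := is_expansion_tail q y e ltac:(lra) H).
  rewrite H0, <- greedy_map_digit in Htail.
  assert (Hfree' : forall j, (j < m)%nat -> ~ switch_region q (greedy_iter q j (greedy_map q y)))
    by (intros j Hj; rewrite <- greedy_iter_succ_r; apply Hfree; lia).
  destruct (IH _ _ Hfree' Htail) as [Hpre Hrest].
  split; [| rewrite greedy_iter_succ_r; exact Hrest].
  intros [|j] Hj; [exact H0 |].
  unfold greedy_expansion; rewrite greedy_iter_succ_r; apply (Hpre j); lia.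
Qed.

Lemma is_expansion_unique q y e : 1 < q -> avoids_switch q y -> is_expansion q y e ->
  e = greedy_expansion q y.
Proof.
  intros Hq Hy H; apply functional_extensionality; intros n.
  apply (is_expansion_forced_prefix q (S n) y e Hq (fun j _ => Hy j) H); lia.
Qed.

Lemma is_expansion_splice_greedy q m y f : 0 < q ->
  is_expansion q (greedy_iter q m y) f -> is_expansion q y (splice m (greedy_expansion q y) f).
Proof.
  intros Hq; revert y f; induction m as [|m IH]; intros y f H.
  - replace (splice 0 (greedy_expansion q y) f) with f; [exact H |].
    apply functional_extensionality; intros n; unfold splice; simpl; f_equal; lia.
  - rewrite greedy_iter_succ_r in H; apply IH in H.
    rewrite greedy_map_digit in H at 1.
    apply (is_expansion_scons q y (greedy_digit q y)) in H; [| exact Hq].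
    replace (splice (S m) (greedy_expansion q y) f)
      with (scons (greedy_digit q y) (splice m (greedy_expansion q (greedy_map q y)) f));
      [exact H |].
    apply functional_extensionality; intros [|n]; [reflexivity |].
    unfold splice, greedy_expansion; cbn [scons].
    change (S n <? S m)%nat with (n <? m)%nat; change (S n - S m)%nat with (n - m)%nat.
    rewrite greedy_iter_succ_r; reflexivity.
Qed.

Lemma avoids_switch_of_iter q m y :
  (forall j, (j < m)%nat -> ~ switch_region q (greedy_iter q j y)) ->
  avoids_switch q (greedy_iter q m y) -> avoids_switch q y.
Proof.
  intros Hpre Hm n; destruct (Nat.lt_ge_cases n m) as [Hn | Hn]; [auto |].
  replace n with ((n - m) + m)%nat by lia; rewrite greedy_iter_add; apply Hm.
Qed.

Lemma greedy_map_reflect q y : 1 < q <= 2 -> ~ switch_region q y ->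
  greedy_map q (/ (q - 1) - y) = / (q - 1) - greedy_map q y.
Proof.
  unfold switch_region, greedy_map; intros Hq Hy.
  assert (Hid : / (q - 1) - / q = / (q * (q - 1))) by (field; lra).
  assert (/ q <= / (q * (q - 1))) by (apply Rinv_le_contravar; nra).
  destruct (Rlt_dec (/ (q - 1) - y) (/ q)), (Rlt_dec y (/ q));
    try (field; lra); exfalso; apply Hy; lra.
Qed.

Lemma switch_region_reflect q y : 1 < q ->
  switch_region q (/ (q - 1) - y) -> switch_region q y.
Proof.
  unfold switch_region; intros Hq.
  assert (Hid : / (q - 1) - / q = / (q * (q - 1))) by (field; lra); lra.
Qed.

Lemma greedy_iter_reflect q n y : 1 < q <= 2 ->
  (forall j, (j < n)%nat -> ~ switch_region q (greedy_iter q j y)) ->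
  greedy_iter q n (/ (q - 1) - y) = / (q - 1) - greedy_iter q n y.
Proof.
  intros Hq; induction n as [|n IH]; intros Hpre; [reflexivity |].
  rewrite !greedy_iter_succ, IH by auto; apply greedy_map_reflect; auto.
Qed.

Lemma greedy_iter_small q m y : 1 < q -> 0 <= y -> q ^ m * y < 1 ->
  (forall j, (j < m)%nat -> greedy_iter q j y < / q) /\ greedy_iter q m y = q ^ m * y.
Proof.
  intros Hq Hy Hm.
  assert (Hlt : forall j, (j < m)%nat -> q ^ j * y < / q).
  { intros j Hj; apply (Rmult_lt_reg_l q); [lra |]; rewrite Rinv_r by lra.
    assert (q ^ S j <= q ^ m) by (apply Rle_pow; [lra | lia]); simpl in *; nra. }
  assert (Hform : forall j, (j <= m)%nat -> greedy_iter q j y = q ^ j * y).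
  { induction j as [|j IH]; intros Hj; [simpl; ring |].
    rewrite greedy_iter_succ, IH by lia; unfold greedy_map.
    destruct Rlt_dec as [_ | Hge]; [simpl; ring | exfalso; apply Hge, Hlt; lia]. }
  split; [intros j Hj; rewrite Hform by lia; auto | auto].
Qed.

Lemma greedy_iter_near_top q m y : 1 < q <= 2 -> 0 <= / (q - 1) - y ->
  q ^ m * (/ (q - 1) - y) < 1 ->
  (forall j, (j < m)%nat -> ~ switch_region q (greedy_iter q j y)) /\
  greedy_iter q m y = / (q - 1) - q ^ m * (/ (q - 1) - y).
Proof.
  intros Hq H0 Hm; set (u := / (q - 1) - y) in *.
  replace y with (/ (q - 1) - u) by (unfold u; ring).
  destruct (greedy_iter_small q m u ltac:(lra) H0 Hm) as [Hlt Hu].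
  assert (Hfree : forall j, (j < m)%nat -> ~ switch_region q (greedy_iter q j u))
    by (intros j Hj [H1 _]; specialize (Hlt j Hj); lra).
  split.
  - intros j Hj; rewrite greedy_iter_reflect by (auto; intros i Hi; apply Hfree; lia).
    intros Hs; apply (Hfree j Hj), (switch_region_reflect q _ ltac:(lra)), Hs.
  - rewrite greedy_iter_reflect, Hu by auto; reflexivity.
Qed.

Lemma avoids_switch_small q m y : 1 < q -> 0 <= y -> q ^ m * y < 1 ->
  avoids_switch q (q ^ m * y) -> avoids_switch q y.
Proof.
  intros Hq H0 Hm Hav; destruct (greedy_iter_small q m y Hq H0 Hm) as [Hlt Hy].
  apply (avoids_switch_of_iter q m); [intros j Hj [H1 _]; specialize (Hlt j Hj); lra |].
  rewrite Hy; exact Hav.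
Qed.

Lemma avoids_switch_near_top q m y : 1 < q <= 2 -> 0 <= / (q - 1) - y ->
  q ^ m * (/ (q - 1) - y) < 1 ->
  avoids_switch q (/ (q - 1) - q ^ m * (/ (q - 1) - y)) -> avoids_switch q y.
Proof.
  intros Hq H0 Hm Hav; destruct (greedy_iter_near_top q m y Hq H0 Hm) as [Hpre Hy].
  apply (avoids_switch_of_iter q m); [exact Hpre | rewrite Hy; exact Hav].
Qed.

(** * Points with exactly three expansions *)

Lemma switch_region_scaled q y : 1 < q -> switch_region q y <-> 1 <= q * y <= / (q - 1).
Proof.
  unfold switch_region; intros Hq.
  assert (Hq0 : q * / q = 1) by (field; lra).
  assert (Hinv : / (q * (q - 1)) = / q * / (q - 1)) by (field; lra).
  assert (0 < / q) by (apply Rinv_0_lt_compat; lra).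
  rewrite Hinv; split; intros [H1 H2]; split; nra.
Qed.

Lemma switch_region_children q y : 1 < q -> switch_region q y ->
  in_Iq q (q * y - 1) /\ in_Iq q (q * y).
Proof.
  unfold in_Iq; intros Hq Hy; apply switch_region_scaled in Hy; [| exact Hq].
  assert (1 / (q - 1) = / (q - 1)) by (field; lra).
  assert (0 < / (q - 1)) by (apply Rinv_0_lt_compat; lra).
  split; split; lra.
Qed.

Lemma switch_region_in_Iq q y : 1 < q <= 2 -> switch_region q y -> in_Iq q y.
Proof.
  unfold in_Iq; intros Hq [H1 H2]; split.
  - apply Rle_trans with (/ q); [apply Rlt_le, Rinv_0_lt_compat; lra | exact H1].
  - apply Rle_trans with (/ (q * (q - 1))); [exact H2 |].
    unfold Rdiv; rewrite Rmult_1_l; apply Rinv_le_contravar; nra.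
Qed.

Lemma has_exactly_three_expansions_of_branching q m x : 1 < q <= 2 -> switch_region q x ->
  (forall j, (j < m)%nat -> ~ switch_region q (greedy_iter q j (q * x))) ->
  switch_region q (greedy_iter q m (q * x)) ->
  avoids_switch q (q * x - 1) ->
  avoids_switch q (q * greedy_iter q m (q * x) - 1) ->
  avoids_switch q (q * greedy_iter q m (q * x)) ->
  has_exactly_three_expansions q x.
Proof.
  intros Hq Hx Hpre Hz A1 A2 A3; set (z := greedy_iter q m (q * x)) in *.
  assert (Hq0 : 0 < q) by lra.
  destruct (switch_region_children q x ltac:(lra) Hx) as [Ix1 Ix0].
  destruct (switch_region_children q z ltac:(lra) Hz) as [Iz1 Iz0].
  exists (scons true (greedy_expansion q (q * x - 1))),
    (scons false (splice m (greedy_expansion q (q * x))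
       (scons false (greedy_expansion q (q * z))))),
    (scons false (splice m (greedy_expansion q (q * x))
       (scons true (greedy_expansion q (q * z - 1))))).
  assert (Hsplice : forall f g, splice m f g m = g O)
    by (intros f g; unfold splice; rewrite Nat.ltb_irrefl, Nat.sub_diag; reflexivity).
  repeat split.
  - apply is_expansion_scons; auto using is_expansion_greedy.
  - apply is_expansion_scons; rewrite ?digit_false, ?Rminus_0_r; auto.
    apply is_expansion_splice_greedy; auto.
    apply is_expansion_scons; rewrite ?digit_false, ?Rminus_0_r; auto using is_expansion_greedy.
  - apply is_expansion_scons; rewrite ?digit_false, ?Rminus_0_r; auto.
    apply is_expansion_splice_greedy; auto.
    apply is_expansion_scons; auto using is_expansion_greedy.
  - intros H; apply (f_equal (fun f => f O)) in H; discriminate.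
  - intros H; apply (f_equal (fun f => f O)) in H; discriminate.
  - intros H; apply (f_equal (fun f => f (S m))) in H; simpl in H.
    rewrite !Hsplice in H; discriminate.
  - intros e He; rewrite (scons_eta e).
    assert (Htail := is_expansion_tail q x e Hq0 He).
    destruct (e O); rewrite ?digit_true, ?digit_false, ?Rminus_0_r in Htail.
    + left; rewrite (is_expansion_unique q _ _ ltac:(lra) A1 Htail); reflexivity.
    + right; destruct (is_expansion_forced_prefix q m _ _ ltac:(lra) Hpre Htail) as [Hp Hr].
      rewrite (splice_eta m _ _ Hp), (scons_eta (fun n => e (S (m + n)))).
      assert (Hz_tail := is_expansion_tail q z _ Hq0 Hr); simpl in Hz_tail.
      destruct (e (S (m + 0))); rewrite ?digit_true, ?digit_false, ?Rminus_0_r in Hz_tail.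
      * right; rewrite (is_expansion_unique q _ _ ltac:(lra) A2 Hz_tail); reflexivity.
      * left; rewrite (is_expansion_unique q _ _ ltac:(lra) A3 Hz_tail); reflexivity.
Qed.

(** * Avoiding the switch region simultaneously *)

Definition switch_width (q : R) : R := / (q * (q - 1)) - / q.

Lemma affine_segment_below q A c l t : 1 < q <= 2 -> 0 < c ->
  (forall s, 0 <= s <= l -> ~ switch_region q (A + c * s)) -> A < / q -> 0 <= t <= l ->
  A + c * t < / q.
Proof.
  intros Hq Hc Hfree HA Ht; destruct (Rlt_dec (A + c * t) (/ q)) as [| Hge]; [assumption |].
  exfalso; set (s := (/ q - A) / c).
  assert (Hs : A + c * s = / q) by (unfold s; field; lra).
  assert (0 <= s <= t).
  { unfold s; split; [apply Rlt_le, Rdiv_lt_0_compat; lra |].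
    apply (Rmult_le_reg_l c); [lra |]; unfold Rdiv; rewrite <- Rmult_assoc, Rinv_r_simpl_m; lra. }
  apply (Hfree s); [lra |]; rewrite Hs; split; [lra |].
  apply Rinv_le_contravar; nra.
Qed.

Lemma greedy_iter_affine q n w l : 1 < q <= 2 ->
  (forall t, 0 <= t <= l -> forall j, (j < n)%nat -> ~ switch_region q (greedy_iter q j (w + t))) ->
  forall t, 0 <= t <= l -> greedy_iter q n (w + t) = greedy_iter q n w + q ^ n * t.
Proof.
  intros Hq; induction n as [|n IH]; intros Hfree t Ht; [simpl; ring |].
  assert (Hn : forall s, 0 <= s <= l -> greedy_iter q n (w + s) = greedy_iter q n w + q ^ n * s)
    by (apply IH; intros; apply Hfree; auto).
  assert (Hfree_n : forall s, 0 <= s <= l -> ~ switch_region q (greedy_iter q n w + q ^ n * s))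
    by (intros s Hs; rewrite <- Hn by auto; apply Hfree; auto).
  assert (Hpos : 0 < q ^ n) by (apply pow_lt; lra).
  rewrite !greedy_iter_succ, Hn by auto; unfold greedy_map; simpl.
  destruct (Rlt_dec (greedy_iter q n w) (/ q)) as [Hlt | Hge].
  - pose proof (affine_segment_below q _ _ l t Hq Hpos Hfree_n Hlt Ht).
    destruct Rlt_dec; [ring | lra].
  - assert (0 <= q ^ n * t) by (apply Rmult_le_pos; lra).
    destruct Rlt_dec; [lra | ring].
Qed.

Lemma affine_window q a c : 1 < q < 2 -> 3 / 2 <= c ->
  exists b, forall t, t <= b \/ b + switch_width q <= t -> ~ switch_region q (a + c * t).
Proof.
  intros Hq Hc; set (w := switch_width q).
  assert (Hw : 0 < w).
  { unfold w, switch_width; assert (0 < q * (q - 1)) by nra.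
    assert (/ q < / (q * (q - 1))) by (apply Rinv_lt_contravar; [apply Rmult_lt_0_compat |]; nra).
    lra. }
  assert (Hdef : / (q * (q - 1)) = / q + w) by (unfold w, switch_width; ring).
  set (b := (/ q - a) / c - w / 4).
  assert (Hcb : c * b = / q - a - c * w / 4) by (unfold b; field; lra).
  exists b; intros t Ht; unfold switch_region; rewrite Hdef; intros [H1 H2].
  destruct Ht as [Ht | Ht].
  - assert (c * t <= c * b) by (apply Rmult_le_compat_l; lra); nra.
  - assert (c * (b + w) <= c * t) by (apply Rmult_le_compat_l; lra); nra.
Qed.

Lemma list_choice {A B : Type} (P : A -> B -> Prop) (xs : list A) :
  (forall x, In x xs -> exists y, P x y) ->
  exists ys, length ys = length xs /\ forall x, In x xs -> exists y, In y ys /\ P x y.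
Proof.
  induction xs as [|x xs IH]; intros H; [exists []; split; [reflexivity | intros _ []] |].
  destruct (H x (or_introl eq_refl)) as [y Hy].
  destruct IH as [ys [Hlen Hys]]; [intros x' Hx'; apply H; right; exact Hx' |].
  exists (y :: ys); split; [simpl; lia |].
  intros x' [<- | Hx']; [exists y; split; [left |]; auto |].
  destruct (Hys x' Hx') as [y' [Hy' HP]]; exists y'; split; [right |]; auto.
Qed.

Lemma gap_between_windows l w : 0 <= l -> 0 <= w -> forall (bs : list R) A B,
  INR (S (length bs)) * l + INR (length bs) * w <= B - A ->
  exists o, A <= o /\ o + l <= B /\ forall b, In b bs -> o + l <= b \/ b + w <= o.
Proof.
  intros Hl Hw bs; remember (length bs) as n eqn:Hn; revert bs Hn.
  induction n as [|n IH]; intros bs Hn A B HAB.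
  - destruct bs; [| discriminate]; exists A; simpl in HAB; repeat split; [lra | lra | intros b []].
  - destruct (classic (exists b, In b bs /\ b < A + l /\ A < b + w))
      as [[b0 [Hin [H1 H2]]] | Hnone].
    + destruct (in_split _ _ Hin) as [bs1 [bs2 ->]].
      destruct (IH (bs1 ++ bs2)) with (A := b0 + w) (B := B) as [o [Ho1 [Ho2 Ho3]]].
      { rewrite length_app in *; simpl in Hn; lia. }
      { rewrite !S_INR in HAB; rewrite S_INR; lra. }
      exists o; repeat split; [lra | lra |]; intros b Hb.
      apply in_app_or in Hb; destruct Hb as [Hb | [<- | Hb]];
        [apply Ho3, in_or_app; auto | right; lra | apply Ho3, in_or_app; auto].
    + exists A; rewrite (S_INR (S n)) in HAB.
      assert (0 <= INR (S n) * l + INR (S n) * w)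
        by (apply Rplus_le_le_0_compat; apply Rmult_le_pos; auto; apply pos_INR).
      repeat split; [lra | lra |]; intros b Hb.
      destruct (Rlt_dec b (A + l)); [| left; lra].
      destruct (Rlt_dec A (b + w)); [| right; lra].
      exfalso; apply Hnone; exists b; auto.
Qed.

Lemma nested_intervals (P : nat -> R -> Prop) (len : nat -> R) (x0 : R) :
  P O x0 -> (forall m, 0 <= len m) ->
  (forall m x, P m x -> exists x', P (S m) x' /\ x <= x' /\ x' + len (S m) <= x + len m) ->
  exists a, x0 <= a <= x0 + len O /\ forall m, exists x, P m x /\ x <= a <= x + len m.
Proof.
  intros H0 Hlen Hstep.
  assert (Hnext : forall m x, exists x',
    P m x -> P (S m) x' /\ x <= x' /\ x' + len (S m) <= x + len m).
  { intros m x; destruct (classic (P m x)) as [Hx | Hx].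
    - destruct (Hstep m x Hx) as [x' Hx']; exists x'; auto.
    - exists x; intros; contradiction. }
  set (F := fun m x => proj1_sig (constructive_indefinite_description _ (Hnext m x))).
  assert (HF : forall m x, P m x -> P (S m) (F m x) /\ x <= F m x /\ F m x + len (S m) <= x + len m)
    by (intros m x; unfold F; destruct constructive_indefinite_description; auto).
  set (u := fix u (m : nat) : R := match m with O => x0 | S m' => F m' (u m') end).
  assert (HP : forall m, P m (u m)) by (induction m; simpl; auto; apply HF; auto).
  assert (Hu : forall m, u m <= u (S m) /\ u (S m) + len (S m) <= u m + len m)
    by (intros m; simpl; split; apply HF; auto).
  assert (Hgrow : Un_growing u) by (intros m; apply Hu).
  assert (Hshrink : forall m n, u (n + m)%nat + len (n + m)%nat <= u m + len m).
  { intros m; induction n as [|n IH]; [simpl; lra |].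
    pose proof (Hu (n + m)%nat); simpl in *; lra. }
  destruct (growing_cv u Hgrow) as [l Hl].
  { exists (x0 + len O); intros y [m ->]; pose proof (Hshrink O m); pose proof (Hlen m).
    rewrite Nat.add_0_r in *; simpl in *; lra. }
  assert (Hhi : forall m, l <= u m + len m).
  { intros m; apply (Rle_cv_lim (Un := fun n => u (n + m)%nat) (Vn := fun _ => u m + len m)).
    - intros n; pose proof (Hshrink m n); pose proof (Hlen (n + m)%nat); lra.
    - exact (CV_shift' _ _ _ Hl).
    - apply Un_cv_const. }
  exists l; split; [split; [apply (growing_ineq u l Hgrow Hl O) | apply (Hhi O)] |].
  intros m; exists (u m); repeat split; [auto | apply (growing_ineq u l Hgrow Hl) | auto].
Qed.

Section NearTwo.

Variable q : R.
Hypothesis q_near_two : 1995 / 1000 <= q < 2.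

Lemma inv_q_bounds : 1 / 2 < / q <= 1000 / 1995 /\ 1 / 2 < / (q * (q - 1)) <= 10000 / 19850.
Proof.
  assert (q * / q = 1) by (field; lra).
  assert (q * (q - 1) * / (q * (q - 1)) = 1) by (field; lra).
  assert (1995 * 995 / 1000000 <= q * (q - 1) < 2) by nra.
  repeat split; nra.
Qed.

Lemma switch_width_bounds : 0 < switch_width q <= 1 / 396.
Proof.
  unfold switch_width; destruct inv_q_bounds.
  assert (q * / q = 1) by (field; lra).
  assert (Hinv : / (q * (q - 1)) = / q * / (q - 1)) by (field; lra).
  assert ((q - 1) * / (q - 1) = 1) by (field; lra).
  assert (1 < / (q - 1) <= 1000 / 995) by (split; nra).
  rewrite Hinv; split; nra.
Qed.

(* Just below 1/q the map lands near 1 and just above 1/(q(q-1)) near 0, and the next step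
   stays on the same side of the switch region. *)
Lemma switch_escape y d : ~ switch_region q y -> / q - d <= y <= / (q * (q - 1)) + d ->
  0 <= d <= 2 / 25 ->
  ~ switch_region q (greedy_map q y) /\ ~ switch_region q (greedy_map q (greedy_map q y)).
Proof.
  intros Hy Hd Hd0; destruct inv_q_bounds as [[Hi1 Hi2] [Hj1 Hj2]].
  assert (q * / q = 1) by (field; lra).
  assert (Hj : q * / (q * (q - 1)) - 1 <= 1 / 99).
  { replace (q * / (q * (q - 1)) - 1) with ((2 - q) / (q - 1)) by (field; lra).
    apply (Rmult_le_reg_r (q - 1)); [lra |]; unfold Rdiv; rewrite Rmult_assoc, Rinv_l; lra. }
  unfold switch_region in *; unfold greedy_map.
  destruct (Rlt_dec y (/ q)) as [Hlt | Hge].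
  - assert (q * y > / (q * (q - 1))) by nra.
    destruct (Rlt_dec (q * y) (/ q)); [lra |].
    assert (q * (q * y) - 1 > / (q * (q - 1))) by nra.
    split; intros [? ?]; lra.
  - assert (Hy' : y > / (q * (q - 1)))
      by (destruct (Rle_lt_dec y (/ (q * (q - 1)))); [exfalso; apply Hy; lra | lra]).
    assert (q * y - 1 < / q) by nra.
    destruct (Rlt_dec (q * y - 1) (/ q)); [| lra].
    assert (q * (q * y - 1) < / q) by nra.
    split; intros [? ?]; lra.
Qed.

Definition clear_upto (v : R) (n : nat) : Prop :=
  forall t, 0 <= t <= 1 / 50 -> forall j, (j <= n)%nat ->
    ~ switch_region q (greedy_iter q j (v + t)).

Definition clear_outside_window (v b : R) : Prop :=
  forall t, 0 <= t <= 1 / 50 -> t <= b \/ b + switch_width q <= t ->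
    forall j, (j <= 3)%nat -> ~ switch_region q (greedy_iter q j (v + t)).

Lemma clear_or_window v n : (n <= 3)%nat -> clear_upto v 0 ->
  clear_upto v n \/ exists b, clear_outside_window v b.
Proof.
  induction n as [|n IH]; intros Hn H0; [left; exact H0 |].
  destruct IH as [Hc | Hw]; [lia | exact H0 | | right; exact Hw].
  set (c := q ^ S n); set (A := greedy_iter q (S n) v).
  assert (Haff : forall t, 0 <= t <= 1 / 50 -> greedy_iter q (S n) (v + t) = A + c * t)
    by (apply greedy_iter_affine; [lra | intros t Ht j Hj; apply Hc; auto; lia]).
  assert (Hc1 : q <= c) by (unfold c; rewrite <- (pow_1 q) at 1; apply Rle_pow; [lra | lia]).
  destruct (classic (exists t0, 0 <= t0 <= 1 / 50 /\ switch_region q (A + c * t0)))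
    as [[t0 [Ht0 [Hs1 Hs2]]] | Hnone].
  - right; destruct (affine_window q A c ltac:(lra) ltac:(lra)) as [b Hb].
    exists b; intros t Ht Hout j Hj.
    assert (Hhit : ~ switch_region q (greedy_iter q (S n) (v + t))) by (rewrite Haff; auto).
    destruct (Nat.le_gt_cases j (S n)) as [Hjle | Hjgt].
    + destruct (Nat.eq_dec j (S n)) as [-> | Hne]; [exact Hhit | apply Hc; auto; lia].
    + assert (Hc4 : c <= 4).
      { apply Rle_trans with (q ^ 2); [apply Rle_pow; [lra | lia] | simpl; nra]. }
      assert (Hd : - (c / 50) <= c * t - c * t0 <= c / 50) by (split; nra).
      destruct (switch_escape _ (c / 50) Hhit) as [H1 H2]; [rewrite Haff by auto; lra | lra |].
      assert (Hj' : j = S (S n) \/ j = S (S (S n))) by lia.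
      destruct Hj' as [-> | ->]; rewrite !greedy_iter_succ; assumption.
  - left; intros t Ht j Hj.
    destruct (Nat.eq_dec j (S n)) as [-> | Hne]; [| apply Hc; auto; lia].
    rewrite Haff by auto; intros Hs; apply Hnone; exists t; auto.
Qed.

Lemma exists_clear_outside_window v : clear_upto v 0 -> exists b, clear_outside_window v b.
Proof.
  intros H0; destruct (clear_or_window v 3 ltac:(lia) H0) as [Hc | Hw]; [| exact Hw].
  exists (-1); intros t Ht _ j Hj; apply Hc; auto.
Qed.

(* Three windows of width at most 1/396 leave a gap of length (1/50)/q^3 in [0, 1/50]. *)
Lemma common_clear_subinterval (vs : list R) : (length vs <= 3)%nat ->
  (forall v, In v vs -> clear_upto v 0) ->
  exists o, 0 <= o /\ o + (1 / 50) / q ^ 3 <= 1 / 50 /\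
    forall v, In v vs -> forall t, o <= t <= o + (1 / 50) / q ^ 3 ->
      forall j, (j <= 3)%nat -> ~ switch_region q (greedy_iter q j (v + t)).
Proof.
  intros Hlen Hclear.
  destruct (list_choice clear_outside_window vs) as [bs [Hbs Hwin]];
    [intros v Hv; apply exists_clear_outside_window, Hclear, Hv |].
  assert (Hq3 : 7940 / 1000 <= q ^ 3) by (simpl; nra).
  assert (Hl : 0 <= (1 / 50) / q ^ 3 <= (1 / 50) * (1000 / 7940)).
  { assert (0 < / q ^ 3 <= 1000 / 7940).
    { split; [apply Rinv_0_lt_compat; lra |].
      replace (1000 / 7940) with (/ (7940 / 1000)) by field; apply Rinv_le_contravar; lra. }
    unfold Rdiv; split; nra. }
  destruct switch_width_bounds as [Hw0 Hw1].
  destruct (gap_between_windows ((1 / 50) / q ^ 3) (switch_width q) ltac:(lra) ltac:(lra)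
    bs 0 (1 / 50)) as [o [Ho1 [Ho2 Ho3]]].
  { rewrite Hbs; assert (Hn : INR (length vs) <= 3) by (replace 3 with (INR 3) by (simpl; lra);
      apply le_INR; lia).
    rewrite S_INR; nra. }
  exists o; repeat split; [lra | lra |]; intros v Hv t Ht j Hj.
  destruct (Hwin v Hv) as [b [Hb Hclear_b]].
  apply Hclear_b; [lra | | exact Hj].
  destruct (Ho3 b Hb); [left | right]; lra.
Qed.

Definition good_interval (cs : list R) (m : nat) (x : R) : Prop :=
  forall c, In c cs -> forall y, x <= y <= x + (1 / 50) / q ^ (3 * m) ->
    forall j, (j <= 3 * m)%nat -> ~ switch_region q (greedy_iter q j (y + c)).

Lemma good_interval_affine cs m x c : good_interval cs m x -> In c cs ->
  forall t, 0 <= t <= (1 / 50) / q ^ (3 * m) ->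
  greedy_iter q (3 * m) (x + c + t) = greedy_iter q (3 * m) (x + c) + q ^ (3 * m) * t.
Proof.
  intros Hgood Hc; apply greedy_iter_affine; [lra |]; intros t Ht j Hj.
  replace (x + c + t) with ((x + t) + c) by ring; apply (Hgood c Hc); [lra | lia].
Qed.

Lemma good_interval_step cs m x : (length cs <= 3)%nat -> good_interval cs m x ->
  exists x', good_interval cs (S m) x' /\ x <= x' /\
    x' + (1 / 50) / q ^ (3 * S m) <= x + (1 / 50) / q ^ (3 * m).
Proof.
  intros Hlen Hgood; set (sig := q ^ (3 * m)).
  assert (Hsig : 0 < sig) by (apply pow_lt; lra).
  assert (Hq3 : 0 < q ^ 3) by (apply pow_lt; lra).
  assert (Hnext : q ^ (3 * S m) = q ^ 3 * sig)
    by (unfold sig; rewrite <- pow_add; f_equal; lia).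
  set (vs := map (fun c => greedy_iter q (3 * m) (x + c)) cs).
  destruct (common_clear_subinterval vs) as [o [Ho1 [Ho2 Ho3]]].
  { unfold vs; rewrite length_map; exact Hlen. }
  { intros v Hv t Ht j Hj; apply in_map_iff in Hv; destruct Hv as [c [<- Hc]].
    replace j with 0%nat by lia; change (greedy_iter q 0 ?z) with z.
    assert (Hts : 0 <= t / sig <= (1 / 50) / sig)
      by (unfold Rdiv; split; [| apply Rmult_le_compat_r]; try apply Rmult_le_pos;
          try apply Rlt_le, Rinv_0_lt_compat; lra).
    replace (greedy_iter q (3 * m) (x + c) + t) with (greedy_iter q (3 * m) (x + c + t / sig))
      by (rewrite (good_interval_affine cs m x c Hgood Hc) by exact Hts; fold sig; field; lra).
    replace (x + c + t / sig) with ((x + t / sig) + c) by ring.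
    apply (Hgood c Hc); [fold sig; lra | lia]. }
  assert (Hol : o / sig + (1 / 50) / q ^ 3 / sig <= (1 / 50) / sig)
    by (unfold Rdiv; rewrite <- Rmult_plus_distr_r; apply Rmult_le_compat_r;
        [apply Rlt_le, Rinv_0_lt_compat |]; lra).
  assert (Ho0 : 0 <= o / sig) by (apply Rmult_le_pos; [| apply Rlt_le, Rinv_0_lt_compat]; lra).
  assert (Hlen' : (1 / 50) / q ^ (3 * S m) = (1 / 50) / q ^ 3 / sig) by (rewrite Hnext; field; lra).
  exists (x + o / sig); rewrite Hlen'; repeat split; [| lra | fold sig; lra].
  intros c Hc y Hy j Hj.
  destruct (Nat.le_gt_cases j (3 * m)) as [Hjm | Hjm];
    [apply (Hgood c Hc); [fold sig; lra | lia] |].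
  replace j with ((j - 3 * m) + 3 * m)%nat by lia; rewrite greedy_iter_add.
  replace (y + c) with (x + c + (y - x)) by ring.
  rewrite (good_interval_affine cs m x c Hgood Hc) by (fold sig; lra); fold sig.
  apply Ho3; [apply in_map_iff; exists c; auto | | lia].
  split.
  - replace o with (sig * (o / sig)) by (field; lra); apply Rmult_le_compat_l; lra.
  - replace (o + (1 / 50) / q ^ 3) with (sig * (o / sig + (1 / 50) / q ^ 3 / sig))
      by (field; lra).
    apply Rmult_le_compat_l; lra.
Qed.

Lemma simultaneous_avoidance (cs : list R) x0 : (length cs <= 3)%nat ->
  (forall c, In c cs -> forall t, 0 <= t <= 1 / 50 -> ~ switch_region q (x0 + t + c)) ->
  exists a, x0 <= a <= x0 + 1 / 50 /\ forall c, In c cs -> avoids_switch q (a + c).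
Proof.
  intros Hlen H0.
  destruct (nested_intervals (good_interval cs) (fun m => (1 / 50) / q ^ (3 * m)) x0)
    as [a [Ha Hnest]].
  - intros c Hc y Hy j Hj; replace j with 0%nat by lia; change (greedy_iter q 0 ?z) with z.
    replace y with (x0 + (y - x0)) by ring; apply H0; auto; simpl in Hy; lra.
  - intros m; apply Rmult_le_pos; [lra | apply Rlt_le, Rinv_0_lt_compat, pow_lt; lra].
  - intros m x Hx; apply good_interval_step; auto.
  - exists a; split; [simpl in Ha; lra |]; intros c Hc n.
    destruct (Hnest n) as [x [Hx Hxa]]; apply (Hx c Hc a Hxa); lia.
Qed.

End NearTwo.

(** * Estimates near the k-Bonacci numbers *)

Lemma Rabs_le_inv x a : Rabs x <= a -> - a <= x <= a.
Proof. intros H; pose proof (Rle_abs x); pose proof (Rle_abs (- x)); rewrite Rabs_Ropp in *; lra. Qed.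

Lemma bernoulli_ineq n u : -1 <= u -> 1 + INR n * u <= (1 + u) ^ n.
Proof.
  intros Hu; induction n as [|n IH]; [simpl; lra |].
  rewrite S_INR; simpl; assert (0 <= INR n) by apply pos_INR; nra.
Qed.

Lemma bernoulli_ineq_rev n u : -1 <= u -> (1 + u) ^ n * (1 - INR n * u) <= 1.
Proof.
  intros Hu; induction n as [|n IH]; [simpl; lra |].
  rewrite S_INR; simpl.
  assert (0 <= (1 + u) ^ n) by (apply pow_le; lra).
  assert (0 <= (INR n + 1) * (u * u) * (1 + u) ^ n)
    by (apply Rmult_le_pos; [apply Rmult_le_pos; [pose proof (pos_INR n) |]; nra | auto]).
  replace ((1 + u) * (1 + u) ^ n * (1 - (INR n + 1) * u))
    with ((1 + u) ^ n * (1 - INR n * u) - (INR n + 1) * (u * u) * (1 + u) ^ n) by ring.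
  lra.
Qed.

Lemma pow_near_one n u D : - D <= u <= D -> D <= 1 / 2 -> 0 <= INR n * D <= 1 / 2 ->
  1 - INR n * D <= (1 + u) ^ n <= 1 + 2 * (INR n * D).
Proof.
  intros Hu HD Hn; set (s := INR n * D) in *.
  assert (Hnu : - s <= INR n * u <= s) by (unfold s; pose proof (pos_INR n); split; nra).
  pose proof (bernoulli_ineq n u ltac:(lra)); pose proof (bernoulli_ineq_rev n u ltac:(lra)).
  assert (0 <= (1 + u) ^ n) by (apply pow_le; lra).
  split; [lra | nra].
Qed.

Lemma kbonacci_identity k r : (1 <= k)%nat -> is_kbonacci k r -> r ^ k * (2 - r) = 1.
Proof.
  intros Hk [_ Hsum]; pose proof (GP_finite r (k - 1)) as Hgp.
  replace (k - 1 + 1)%nat with k in Hgp by lia; rewrite <- Hsum in Hgp; lra.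
Qed.

Lemma linear_le_pow n : (9 <= n)%nat -> 50 * INR n <= (199 / 100) ^ n.
Proof.
  intros Hn; replace n with ((n - 9) + 9)%nat by lia; induction (n - 9)%nat as [|m IH].
  - simpl; lra.
  - rewrite Nat.add_succ_l, S_INR; simpl.
    assert (9 <= INR (m + 9)) by (replace 9 with (INR 9) by (simpl; lra); apply le_INR; lia).
    lra.
Qed.

Lemma kbonacci_bounds k r : (9 <= k)%nat -> 1 < r < 2 -> r ^ k * (2 - r) = 1 ->
  19966 / 10000 <= r /\ 50 * INR k <= r ^ k.
Proof.
  intros Hk Hr Hid.
  assert (Hk9 : 9 <= INR k) by (replace 9 with (INR 9) by (simpl; lra); apply le_INR; lia).
  assert (Hr1 : 17 / 9 <= r).
  { pose proof (bernoulli_ineq k (r - 1) ltac:(lra)) as Hb.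
    replace (1 + (r - 1)) with r in Hb by ring.
    destruct (Rle_lt_dec (17 / 9) r) as [| Hlt]; [assumption | exfalso].
    assert (H1 : (1 + INR k * (r - 1)) * (2 - r) <= r ^ k * (2 - r))
      by (apply Rmult_le_compat_r; lra).
    rewrite Hid in H1.
    assert (0 < (r - 1) * (INR k * (2 - r) - 1)) by (apply Rmult_lt_0_compat; nra); nra. }
  assert (Hpow : 300 <= r ^ k).
  { apply Rle_trans with ((17 / 9) ^ 9); [simpl; lra |].
    apply Rle_trans with ((17 / 9) ^ k); [apply Rle_pow; [lra | lia] | apply pow_incr; lra]. }
  assert (Hr2 : 19966 / 10000 <= r) by nra.
  split; [exact Hr2 |].
  apply Rle_trans with ((199 / 100) ^ k); [apply linear_le_pow; exact Hk | apply pow_incr; lra].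
Qed.

(* With X = Q w and K = X (2 - q), Q (2 - r) = 1 and dl = q - r, the quantity
   (X + 1)(1 - K) expands to (Q w + 1)(1 - w + Q w dl). *)
Lemma perturbation_bound Q w dl D t : 450 <= Q -> 0 <= t -> Q * t <= 1 / 3100 ->
  1 - t <= w <= 1 + 2 * t -> - D <= dl <= D -> Q * Q * D <= 1 / 62 ->
  Rabs ((Q * w + 1) * (1 - w + Q * w * dl)) <= 1 / 40.
Proof.
  intros HQ Ht HQt Hw Hdl HQD.
  assert (Ht' : t <= 1 / 1000000) by nra.
  assert (HD : Q * D <= 1 / 27900) by nra.
  assert (HQw : 0 <= Q * w) by nra.
  assert (HB : Rabs (1 - w + Q * w * dl) <= 2 * t + Q * w * D).
  { eapply Rle_trans; [apply Rabs_triang |].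
    assert (Rabs (1 - w) <= 2 * t) by (apply Rabs_le; lra).
    assert (Rabs (Q * w * dl) <= Q * w * D) by (apply Rabs_le; split; nra).
    lra. }
  rewrite Rabs_mult, (Rabs_pos_eq (Q * w + 1)) by nra.
  apply Rle_trans with ((Q * w + 1) * (2 * t + Q * w * D)); [apply Rmult_le_compat_l; nra |].
  assert (Q * w * t <= (1 / 3100) * (1 + 2 * t)) by nra.
  assert (Q * w * (Q * w * D) <= (1 / 62) * ((1 + 2 * t) * (1 + 2 * t))) by nra.
  assert (Q * w * D <= (1 / 27900) * (1 + 2 * t)) by nra.
  nra.
Qed.

Lemma near_kbonacci_estimates k r q : (9 <= k)%nat -> 1 < r < 2 -> r ^ k * (2 - r) = 1 ->
  Rabs (q - r) <= / r ^ (2 * k + 6) ->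
  1995 / 1000 <= q < 2 /\ 2 <= q ^ k /\ Rabs ((q ^ k + 1) * (1 - q ^ k * (2 - q))) <= 1 / 40.
Proof.
  intros Hk Hr Hid Hqr.
  destruct (kbonacci_bounds k r Hk Hr Hid) as [Hr2 HQk]; set (Q := r ^ k) in *.
  assert (Hk9 : 9 <= INR k) by (replace 9 with (INR 9) by (simpl; lra); apply le_INR; lia).
  assert (H6 : 62 <= r ^ 6)
    by (apply Rle_trans with ((19966 / 10000) ^ 6); [simpl; lra | apply pow_incr; lra]).
  assert (Hpow : r ^ (2 * k + 6) = Q * Q * r ^ 6)
    by (unfold Q; rewrite pow_add; replace (2 * k)%nat with (k + k)%nat by lia;
        rewrite pow_add; ring).
  set (D := / (Q * Q * r ^ 6)); rewrite Hpow in Hqr; fold D in Hqr.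
  assert (HD : Q * Q * D * r ^ 6 = 1) by (unfold D; field; split; lra).
  assert (HD0 : 0 < D) by (unfold D; apply Rinv_0_lt_compat, Rmult_lt_0_compat; nra).
  assert (HQD : Q * Q * D <= 1 / 62) by nra.
  set (dl := q - r) in *.
  assert (Hdl : - D <= dl <= D) by (apply Rabs_le_inv; exact Hqr).
  set (u := dl / r); set (t := INR k * D).
  assert (Hu : - D <= u <= D) by (unfold u; split; apply (Rmult_le_reg_r r); try lra;
    unfold Rdiv; rewrite Rmult_assoc, Rinv_l by lra; nra).
  assert (HQt : Q * t <= 1 / 3100) by (unfold t; nra).
  destruct (pow_near_one k u D Hu ltac:(nra) ltac:(split; unfold t in HQt; nra)) as [Hw1 Hw2].
  fold t in Hw1, Hw2.
  assert (HX : q ^ k = Q * (1 + u) ^ k)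
    by (unfold Q; rewrite <- Rpow_mult_distr; f_equal; unfold u, dl; field; lra).
  assert (HQ0 : Q * / Q = 1) by (field; lra).
  assert (Hr2' : 2 - r = / Q) by (apply (Rmult_eq_reg_l Q); [rewrite HQ0; exact Hid | lra]).
  assert (HDQ : D < / Q).
  { assert (Q * D < 1) by nra.
    assert (0 < / Q) by (apply Rinv_0_lt_compat; lra); nra. }
  assert (Hqdl : q = r + dl) by (unfold dl; ring).
  assert (HDsmall : D <= 1 / 1000) by nra.
  assert (Hwpos : 1 / 2 <= (1 + u) ^ k) by (unfold t in *; nra).
  repeat split; [lra | lra | rewrite HX; nra |].
  replace ((q ^ k + 1) * (1 - q ^ k * (2 - q)))
    with ((Q * (1 + u) ^ k + 1) * (1 - (1 + u) ^ k + Q * (1 + u) ^ k * dl))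
    by (rewrite HX; replace (2 - q) with (/ Q - dl) by (unfold dl; lra); field; lra).
  apply (perturbation_bound Q _ dl D t); unfold t in *; try nra; lra.
Qed.

Lemma near_top_run_bounds q X a : 1995 / 1000 <= q < 2 -> 2 <= X ->
  - (3 / 200) <= 1 - X * (2 - q) <= 3 / 200 -> 0 <= a <= 11 / 50 ->
  0 <= / (q - 1) - (1 + a / (X * X)) /\ X / q * (/ (q - 1) - (1 + a / (X * X))) < 1.
Proof.
  intros Hq HX Hd Ha; set (d := 1 - X * (2 - q)) in *; set (u := / (q - 1) - (1 + a / (X * X))).
  assert (Eu : u * (X * X * (q - 1)) = X * (1 - d) - a * (q - 1)) by (unfold u, d; field; lra).
  assert (HXd : X <= X * (1 - d) * (200 / 197)).
  { assert (0 <= X * (1 - d - 197 / 200)) by (apply Rmult_le_pos; lra); nra. }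
  assert (HXX : 0 < X * X * (q - 1)) by (apply Rmult_lt_0_compat; nra).
  split; [apply (Rmult_le_reg_r (X * X * (q - 1))); nra |].
  apply (Rmult_lt_reg_r (q * (q - 1) * X)); [nra |].
  replace (X / q * u * (q * (q - 1) * X)) with (u * (X * X * (q - 1))) by (field; lra).
  assert (0 < X * (q * (q - 1) - (1 - d))) by (apply Rmult_lt_0_compat; nra).
  assert (0 <= a * (q - 1)) by (apply Rmult_le_pos; lra); nra.
Qed.

(* With X = q^k, the point x = (1 + a/X^2)/q branches at once, and again after k-1 forced
   digits; its three children reach a, a + c2 and a + c3 after 2k, k and k steps. *)
Lemma three_expansions_near_kbonacci q k a c2 c3 : (1 <= k)%nat -> 1995 / 1000 <= q < 2 ->
  2 <= q ^ k ->
  c2 = q ^ k * (1 - q ^ k * (2 - q)) / (q - 1) ->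
  c3 = (q ^ k + 1) * (1 - q ^ k * (2 - q)) / (q - 1) ->
  - (3 / 100) <= c2 <= 3 / 100 -> - (3 / 100) <= c3 <= 3 / 100 -> 1 / 5 <= a <= 1 / 5 + 1 / 50 ->
  avoids_switch q a -> avoids_switch q (a + c2) -> avoids_switch q (a + c3) ->
  exists x, in_Iq q x /\ has_exactly_three_expansions q x.
Proof.
  intros Hk Hq HX Hc2 Hc3 Hc2b Hc3b Ha A1 A2 A3.
  set (X := q ^ k) in *; set (d := 1 - X * (2 - q)) in *.
  assert (Hq1 : 1 < q <= 2) by lra.
  assert (Hinv : (q - 1) * / (q - 1) = 1) by (field; lra).
  assert (Hinvb : 1 <= / (q - 1) <= 1000 / 995) by (split; nra).
  assert (Hd : - (3 / 200) <= d <= 3 / 200).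
  { assert (Ed : (X + 1) * d = c3 * (q - 1)) by (rewrite Hc3; field; lra); split; nra. }
  set (x := (1 + a / (X * X)) / q).
  set (u := / (q - 1) - q * x).
  set (z := / (q - 1) - q ^ (k - 1) * u).
  assert (Hpow : q ^ (k - 1) = X / q)
    by (unfold X; replace k with (S (k - 1)) at 2 by lia; simpl; field; lra).
  assert (Hpow2 : q ^ (2 * k) = X * X) by (unfold X; rewrite <- pow_add; f_equal; lia).
  assert (HqX : q * x = 1 + a / (X * X)) by (unfold x; field; lra).
  destruct (near_top_run_bounds q X a Hq HX Hd ltac:(lra)) as [Hu0 Hu1].
  rewrite <- HqX in Hu0, Hu1; fold u in Hu0, Hu1; rewrite <- Hpow in Hu1.
  assert (E2 : X * (q * z - 1) = a + c2)
    by (rewrite Hc2; unfold z; rewrite Hpow; unfold u, x, d; field; lra).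
  assert (E3 : / (q - 1) - X * (/ (q - 1) - q * z) = a + c3)
    by (rewrite Hc3; unfold z; rewrite Hpow; unfold u, x, d; field; lra).
  destruct (greedy_iter_near_top q (k - 1) (q * x) Hq1 Hu0 Hu1) as [Hpre Hz]; fold u z in Hz.
  assert (Ha0 : 0 <= a / (X * X))
    by (apply Rmult_le_pos; [lra | apply Rlt_le, Rinv_0_lt_compat; nra]).
  assert (Hx : switch_region q x)
    by (apply switch_region_scaled; [lra |]; unfold u in Hu0; lra).
  assert (HL2 : 0 <= q * z - 1)
    by (apply (Rmult_le_reg_l X); [lra | rewrite Rmult_0_r, E2; lra]).
  assert (HL3 : 0 <= / (q - 1) - q * z)
    by (apply (Rmult_le_reg_l X); [lra | rewrite Rmult_0_r; lra]).
  exists x; split; [apply switch_region_in_Iq; auto |].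
  apply (has_exactly_three_expansions_of_branching q (k - 1)); rewrite ?Hz; auto.
  - apply switch_region_scaled; lra.
  - rewrite HqX; replace (1 + a / (X * X) - 1) with (a / (X * X)) by ring.
    apply (avoids_switch_small q (2 * k)); rewrite ?Hpow2; [lra | exact Ha0 | |];
      replace (X * X * (a / (X * X))) with a by (field; lra); [lra | exact A1].
  - apply (avoids_switch_small q k); fold X;
      [lra | exact HL2 | rewrite E2; lra | rewrite E2; exact A2].
  - apply (avoids_switch_near_top q k); fold X; [lra | exact HL3 | lra | rewrite E3; exact A3].
Qed.

Lemma in_B3_of_estimates q k : (1 <= k)%nat -> 1995 / 1000 <= q < 2 -> 2 <= q ^ k ->
  Rabs ((q ^ k + 1) * (1 - q ^ k * (2 - q))) <= 1 / 40 -> in_B3 q.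
Proof.
  intros Hk Hq HX Hp.
  set (d := 1 - q ^ k * (2 - q)) in *.
  set (c2 := q ^ k * d / (q - 1)); set (c3 := (q ^ k + 1) * d / (q - 1)).
  apply Rabs_le_inv in Hp.
  assert (HXd : - (1 / 40) <= q ^ k * d <= 1 / 40)
    by (destruct (Rle_lt_dec 0 d); split; nra).
  assert (Hinv : 0 < / (q - 1) <= 1000 / 995).
  { split; [apply Rinv_0_lt_compat; lra |].
    replace (1000 / 995) with (/ (995 / 1000)) by field; apply Rinv_le_contravar; lra. }
  assert (Hc2 : - (3 / 100) <= c2 <= 3 / 100) by (unfold c2, Rdiv; split; nra).
  assert (Hc3 : - (3 / 100) <= c3 <= 3 / 100) by (unfold c3, Rdiv; split; nra).
  destruct (simultaneous_avoidance q Hq [0; c2; c3] (1 / 5)) as [a [Ha Hav]]; [simpl; lia | |].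
  { destruct (inv_q_bounds q Hq) as [[Hq1 _] _].
    intros c Hc t Ht [Hs _]; simpl in Hc; destruct Hc as [<- | [<- | [<- | []]]]; lra. }
  split; [lra |].
  apply (three_expansions_near_kbonacci q k a c2 c3); auto.
  - rewrite <- (Rplus_0_r a); apply Hav; simpl; auto.
  - apply Hav; simpl; auto.
  - apply Hav; simpl; auto.
Qed.

Lemma in_B3_near_kbonacci k r q : (9 <= k)%nat -> is_kbonacci k r ->
  Rabs (q - r) <= / r ^ (2 * k + 6) -> in_B3 q.
Proof.
  intros Hk Hr Hqr.
  destruct (near_kbonacci_estimates k r q Hk (proj1 Hr) (kbonacci_identity k r ltac:(lia) Hr) Hqr)
    as [Hq [HX Hp]].
  apply (in_B3_of_estimates q k); auto; lia.
Qed.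

Theorem theoremB :
  (forall (k : nat) (qk q : R), (10 <= k)%nat -> is_kbonacci k qk ->
     Rabs (q - qk) <= / qk ^ (2 * k + 6) -> in_B3 q) /\
  (forall (q9 q : R), is_kbonacci 9 q9 ->
     0 < q - q9 -> q - q9 <= / q9 ^ 24 -> in_B3 q).
Proof.
  split.
  - intros k qk q Hk; apply in_B3_near_kbonacci; lia.
  - intros q9 q H9 Hpos Hle; apply (in_B3_near_kbonacci 9 q9 q); auto.
    rewrite Rabs_pos_eq by lra; exact Hle.
Qed.
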